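(* Let $P(T)=a_0T^N+a_1T^{N-1}+\cdots+a_N\in\mathbb{L}_p[T]$ with $a_0\neq 0$, $a_N\neq0$, let $s=s^P_{\max}$ and $m=m^P_{\max}$, let $u\in\mathcal{O}_{\mathbb{L}_p}^*$, and write $P_u(T)=P(T+up^{s})=\sum_{i=0}^Nb_{N-i}T^i$. Then: (1) on the range $0\leq x\leq m$, the Newton polygons $\mathrm{NP}(P_u)$ and $\mathrm{NP}(P)$ coincide; (2) for $m<k\leq N$, the point $(k,v_p(b_k))$ lies on or above $\mathrm{NP}(P)$, i.e. $v_p(b_k)\geq v_p(a_m)+s(k-m)$.
   Context: $\mathbb{L}_p$ is the $p$-adic Mal'cev–Neumann field of formal sums $\sum_{x\in\mathbb{Q}}[\alpha_x]p^x$ ($\alpha_x\in\bar{\mathbb{F}}_p$, $[\cdot]$ Teichmüller lift, well-ordered support), with valuation $v_p$ = minimum of support, valuation ring $\mathcal{O}_{\mathbb{L}_p}$ and units $\mathcal{O}_{\mathbb{L}_p}^*$. $\mathrm{NP}(P)$ is the lower boundary of the convex hull of the points $(k,v_p(a_k))$ with $a_k\neq0$; its vertices are the breakpoints; $m^P_{\max}$ is the largest breakpoint $<N$ and $s^P_{\max}=\frac{v_p(a_N)-v_p(a_{m^P_{\max}})}{N-m^P_{\max}}$ is the maximal slope. *)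

From HB Require Import structures.
From mathcomp Require Import all_boot all_order all_algebra.
Set Implicit Arguments. Unset Strict Implicit. Unset Printing Implicit Defensive.
Import Order.TTheory GRing.Theory Num.Theory.
Local Open Scope ring_scope.

(* Abstract interface for the p-adic Mal'cev--Neumann field L_p:
   a field K with a Q-valued valuation v (only meaningful on nonzero
   elements; v 0 stands for +oo and is never used) and rational powers
   pw q = p^q of p (the elements [1] p^q of L_p). *)
Record padic_MN_like (p : nat) (K : fieldType) (v : K -> rat) (pw : rat -> K)
  : Prop := {
  vM : forall x y : K, x != 0 -> y != 0 -> v (x * y) = v x + v y;
  vD : forall x y : K, x != 0 -> y != 0 -> x + y != 0 ->
         Num.min (v x) (v y) <= v (x + y);
  pw_neq0 : forall q, pw q != 0;
  v_pw : forall q, v (pw q) = q;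
  pwD : forall q r, pw (q + r) = pw q * pw r;
  pw1 : pw 1 = p%:R
}.

Section NewtonPolygon.
Variables (K : fieldType) (v : K -> rat).

Definition in_hull (c : nat -> K) (N : nat) (x y : rat) : Prop :=
  exists w : 'I_N.+1 -> rat,
    [/\ forall i, 0 <= w i,
        \sum_i w i = 1,
        forall i, w i != 0 -> c i != 0,
        \sum_i w i * (i : nat)%:R = x
      & \sum_i w i * v (c i) = y].

Definition on_NP (c : nat -> K) (N : nat) (x y : rat) : Prop :=
  in_hull c N x y /\ forall y', in_hull c N x y' -> y <= y'.

Definition above_NP (c : nat -> K) (N : nat) (x y : rat) : Prop :=
  exists y', in_hull c N x y' /\ y' <= y.

Definition breakpoint (c : nat -> K) (N : nat) (k : nat) : Prop :=
  [/\ (k <= N)%N, c k != 0, on_NP c N k%:R (v (c k))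
    & ~ exists x1 y1 x2 y2 (t : rat),
        [/\ on_NP c N x1 y1, on_NP c N x2 y2, x1 < k%:R < x2,
            0 < t < 1
          & k%:R = t * x1 + (1 - t) * x2 /\ v (c k) = t * y1 + (1 - t) * y2]].

End NewtonPolygon.

(* Coefficients a_k of P = a_0 T^N + ... + a_N, N = deg P. *)
Definition rcoef (K : fieldType) (P : {poly K}) (k : nat) : K :=
  P`_((size P).-1 - k).

(* With c = u p^s we have v(c) = s and, writing a_k, b_k for the coefficients of
   P and P_u,  b_k = sum_(j <= k) a_j C(N - j, N - k) c^(k - j),  so that
   v(b_k) >= min_(j <= k) (v(a_j) - s j) + s k.  Since s is the slope of the last
   edge of NP(P), the tilted valuation f(j) = v(a_j) - s j is minimal at j = m: a
   last minimiser of f strictly between m and N would be a later breakpoint, and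
   one left of m would pass NP(P) below (m, v(a_m)).  At a strict prefix minimum
   ("record") j of f the term a_j dominates the sum, so v(b_j) = v(a_j); m is a
   record because it is a vertex.  Over [0, m] every point of the hull of either
   family lies above a point of the hull of the records of f, so both Newton
   polygons coincide there with the lower boundary of the records; beyond m the
   bound above gives (2). *)

From HB Require Import structures.
From mathcomp Require Import all_boot all_order all_algebra.
From mathcomp Require Import ring lra zify.
Import Order.TTheory GRing.Theory Num.Theory.
Local Open Scope ring_scope.

Set Implicit Arguments. Unset Strict Implicit. Unset Printing Implicit Defensive.

Section Valuation.
Variables (K : fieldType) (v : K -> rat).
Hypothesis vM : forall x y : K, x != 0 -> y != 0 -> v (x * y) = v x + v y.
Hypothesis vD : forall x y : K, x != 0 -> y != 0 -> x + y != 0 ->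
  Num.min (v x) (v y) <= v (x + y).

Lemma v1 : v 1 = 0.
Proof. by have := vM (oner_neq0 K) (oner_neq0 K); rewrite mulr1 => ?; lra. Qed.

Lemma vN x : x != 0 -> v (- x) = v x.
Proof.
have N1 : (-1 : K) != 0 by rewrite oppr_eq0 oner_neq0.
have vN1 : v (-1) = 0 by have := vM N1 N1; rewrite mulrNN mulr1 v1 => ?; lra.
by move=> x0; rewrite -mulN1r vM // vN1 add0r.
Qed.

Lemma vX x n : x != 0 -> v (x ^+ n) = n%:R * v x.
Proof.
move=> x0; elim: n => [|n IH]; first by rewrite expr0 v1 mul0r.
by rewrite exprS vM ?expf_neq0 // IH -nat1r mulrDl mul1r.
Qed.

Lemma v_natr_ge0 n : (n%:R : K) != 0 -> 0 <= v n%:R.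
Proof.
elim: n => [|n IH]; first by rewrite eqxx.
rewrite -natr1 => n1; have [n0|n0] := eqVneq (n%:R : K) 0.
  by rewrite n0 add0r v1.
by apply: le_trans (vD n0 (oner_neq0 K) n1); rewrite le_min v1 lexx IH.
Qed.

Lemma v_sum_ge_term (I : Type) (r : seq I) (P : pred I) (F : I -> K) :
  \sum_(i <- r | P i) F i != 0 ->
  exists i, [/\ P i, F i != 0 & v (F i) <= v (\sum_(i <- r | P i) F i)].
Proof.
elim: r => [|x r IH]; first by rewrite big_nil eqxx.
rewrite big_cons; case: ifP => // Px.
set S := \sum_(_ <- _ | _) _ in IH *.
have [->|S0] := eqVneq S 0; first by rewrite addr0 => Fx; exists x.
have [->|Fx] := eqVneq (F x) 0; first by rewrite add0r.
move=> FS; have := vD Fx S0 FS; rewrite ge_min => /orP[vFx | vS]; first by exists x.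
by have [i [Pi Fi le]] := IH S0; exists i; split=> //; apply: le_trans vS.
Qed.

Lemma v_addr_dominant x y : x != 0 -> (y != 0 -> v x < v y) ->
  x + y != 0 /\ v (x + y) = v x.
Proof.
move=> x0 xy; have [->|y0] := eqVneq y 0; first by rewrite addr0.
have {}xy := xy y0.
have xy0 : x + y != 0.
  by rewrite addr_eq0; apply: contraTneq xy => ->; rewrite vN // ltxx.
split=> //; apply/eqP; rewrite eq_le; apply/andP; split.
  have Ny0 : - y != 0 by rewrite oppr_eq0.
  have := vD xy0 Ny0; rewrite addrK vN // ge_min => /(_ x0) /orP[] // vyx.
  by have := lt_le_trans xy vyx; rewrite ltxx.
by have := vD x0 y0 xy0; rewrite min_l // ltW.
Qed.

End Valuation.

Lemma sum_indicator (R : nzSemiRingType) n (j : 'I_n) (F : 'I_n -> R) :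
  \sum_i (i == j)%:R * F i = F j.
Proof.
by rewrite (bigD1 j) //= eqxx mul1r big1 ?addr0 // => i /negbTE ->; rewrite mul0r.
Qed.

Section ConvexHull.
Variables (K : fieldType) (v : K -> rat) (N : nat).
Implicit Types (c d : nat -> K) (x y al be : rat).

Lemma in_hull_point c k : (k <= N)%N -> c k != 0 -> in_hull v c N k%:R (v (c k)).
Proof.
rewrite -ltnS => kN ck; pose k' := Ordinal kN.
exists (fun i => (i == k')%:R); split.
- by move=> i; rewrite ler0n.
- by rewrite -[RHS](sum_indicator k' (fun=> 1)); apply: eq_bigr => i _; rewrite mulr1.
- by move=> i; have [-> //|_] := eqVneq i k'; rewrite eqxx.
- exact: (sum_indicator k' (fun i => (i : nat)%:R)).
- exact: (sum_indicator k' (fun i => v (c i))).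
Qed.

Lemma in_hull_convex c x1 y1 x2 y2 t : 0 <= t <= 1 ->
  in_hull v c N x1 y1 -> in_hull v c N x2 y2 ->
  in_hull v c N (t * x1 + (1 - t) * x2) (t * y1 + (1 - t) * y2).
Proof.
move=> /andP[t0 t1] [w1 [w1_ge0 w1_1 w1_c <- <-]] [w2 [w2_ge0 w2_1 w2_c <- <-]].
exists (fun i => t * w1 i + (1 - t) * w2 i); split.
- by move=> i; rewrite addr_ge0 // mulr_ge0 // subr_ge0.
- by rewrite big_split /= -!mulr_sumr w1_1 w2_1 !mulr1 addrC subrK.
- move=> i; have [w1i|/w1_c //] := eqVneq (w1 i) 0.
  by rewrite w1i mulr0 add0r mulf_eq0 negb_or => /andP[_ /w2_c].
- by rewrite !mulr_sumr -big_split; apply: eq_bigr => i _; rewrite mulrDl !mulrA.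
- by rewrite !mulr_sumr -big_split; apply: eq_bigr => i _; rewrite mulrDl !mulrA.
Qed.

Lemma in_hull_segment c x1 y1 x2 y2 x : x1 < x2 -> x1 <= x <= x2 ->
  in_hull v c N x1 y1 -> in_hull v c N x2 y2 ->
  in_hull v c N x (y1 + (x - x1) / (x2 - x1) * (y2 - y1)).
Proof.
move=> x12 /andP[x1x xx2] h1 h2; set t := (x2 - x) / (x2 - x1).
have d0 : x2 - x1 != 0 by rewrite subr_eq0 gt_eqF.
have t01 : 0 <= t <= 1.
  by rewrite divr_ge0 ?subr_ge0 ?(ltW x12) //= ler_pdivrMr ?subr_gt0 // mul1r; lra.
have := in_hull_convex t01 h1 h2.
by congr in_hull; rewrite /t; field.
Qed.

Lemma in_hull_above_line c x y al be :
  (forall i : 'I_N.+1, c i != 0 -> al + be * i%:R <= v (c i)) ->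
  in_hull v c N x y -> al + be * x <= y.
Proof.
move=> line [w [w_ge0 w_1 w_c <- <-]].
have -> : al = \sum_i w i * al by rewrite -mulr_suml w_1 mul1r.
rewrite -subr_ge0 mulr_sumr -big_split -sumrB /=.
apply: sumr_ge0 => i _; have [->|wi] := eqVneq (w i) 0; first by rewrite !mul0r mulr0 subrr.
rewrite (_ : _ - _ = w i * (v (c i) - (al + be * i%:R))); last by ring.
by rewrite mulr_ge0 // subr_ge0 line // w_c.
Qed.

Lemma in_hull_on_line_le c x al be k :
  (forall i : 'I_N.+1, c i != 0 -> al + be * i%:R <= v (c i)) ->
  (forall i : 'I_N.+1, c i != 0 -> v (c i) = al + be * i%:R -> (i <= k)%N) ->
  in_hull v c N x (al + be * x) -> x <= k%:R.
Proof.
move=> line last [w [w_ge0 w_1 w_c xE yE]].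
have gap0 : \sum_i w i * (v (c i) - (al + be * i%:R)) = 0.
  have E i : w i * (v (c i) - (al + be * i%:R)) =
      w i * v (c i) - (w i * al + be * (w i * i%:R)) by ring.
  under eq_bigr => i _ do rewrite E.
  by rewrite sumrB big_split /= -mulr_suml w_1 mul1r -mulr_sumr xE yE; ring.
have on_line i : w i != 0 -> (i <= k)%N.
  move=> wi; apply: last; first exact: w_c.
  move/eqP: gap0; rewrite psumr_eq0 => [/allP/(_ i (mem_index_enum i))|j _].
    by rewrite mulf_eq0 (negbTE wi) subr_eq0 => /eqP.
  have [->|wj] := eqVneq (w j) 0; first by rewrite mul0r.
  by rewrite mulr_ge0 // subr_ge0 line // w_c.
have -> : k%:R = \sum_i w i * k%:R by rewrite -mulr_suml w_1 mul1r.
rewrite -xE; apply: ler_sum => i _; have [->|wi] := eqVneq (w i) 0; first by rewrite !mul0r.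
by rewrite ler_wpM2l // ler_nat on_line.
Qed.

Lemma on_NP_supporting c al be k :
  (forall i : 'I_N.+1, c i != 0 -> al + be * i%:R <= v (c i)) ->
  (k <= N)%N -> c k != 0 -> v (c k) = al + be * k%:R ->
  on_NP v c N k%:R (v (c k)).
Proof.
move=> line kN ck ek; split; first exact: in_hull_point.
by move=> y /(in_hull_above_line line); rewrite ek.
Qed.

Lemma in_hull_sub c d x y :
  (forall i : 'I_N.+1, d i != 0 -> c i != 0 /\ v (c i) = v (d i)) ->
  in_hull v d N x y -> in_hull v c N x y.
Proof.
move=> sub [w [w_ge0 w_1 w_d xE <-]]; exists w; split=> // [i /w_d /sub[] //|].
apply: eq_bigr => i _; have [->|/w_d /sub[_ ->] //] := eqVneq (w i) 0.
by rewrite !mul0r.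
Qed.

Lemma in_hull_reduce c d s x y :
  (forall i : 'I_N.+1, c i != 0 -> exists g : 'I_N.+1,
      [/\ d g != 0, (g <= i)%N & v (d g) + s * (i%:R - g%:R) <= v (c i)]) ->
  in_hull v c N x y ->
  exists xg yg, [/\ in_hull v d N xg yg, xg <= x & yg + s * (x - xg) <= y].
Proof.
move=> red [w [w_ge0 w_1 w_c xE yE]].
have /fin_all_exists [g gP] : forall i, exists gi : 'I_N.+1, w i != 0 ->
    [/\ d gi != 0, (gi <= i)%N & v (d gi) + s * (i%:R - gi%:R) <= v (c i)].
  move=> i; have [wi|wi] := eqVneq (w i) 0; first by exists i.
  by have [gi ?] := red i (w_c i wi); exists gi.
pose w' j := \sum_(i | g i == j) w i.
have pushE F : \sum_j w' j * F j = \sum_i w i * F (g i).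
  rewrite [RHS](partition_big g predT) //=; apply: eq_bigr => j _.
  by rewrite mulr_suml; apply: eq_bigr => i /eqP ->.
exists (\sum_j w' j * j%:R), (\sum_j w' j * v (d j)); split.
- exists w'; split=> //.
  + by move=> j; apply: sumr_ge0.
  + by rewrite -w_1 [RHS](partition_big g predT).
  + move=> j; apply: contraR => dj; rewrite /w' big1 // => i /eqP gij.
    by apply: contraNeq dj => /gP[]; rewrite gij.
- rewrite pushE -xE; apply: ler_sum => i _.
  have [->|/gP[_ gi _]] := eqVneq (w i) 0; first by rewrite !mul0r.
  by rewrite ler_wpM2l // ler_nat.
- rewrite !pushE -xE -yE -sumrB mulr_sumr -big_split /=; apply: ler_sum => i _.
  have [->|wi] := eqVneq (w i) 0; first by rewrite !mul0r subrr mulr0 addr0.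
  have [_ _ le] := gP i wi.
  rewrite (_ : _ + _ = w i * (v (d (g i)) + s * (i%:R - (g i)%:R))); last by ring.
  by rewrite ler_wpM2l.
Qed.

Lemma on_NP_sub_iff c d x :
  (forall i : 'I_N.+1, d i != 0 -> c i != 0 /\ v (c i) = v (d i)) ->
  (forall y, in_hull v c N x y -> exists2 y', y' <= y & in_hull v d N x y') ->
  forall y, on_NP v c N x y <-> on_NP v d N x y.
Proof.
move=> sub dom y; split=> [[hc minc] | [hd mind]].
- have [y' y'y hd] := dom y hc.
  have yy' : y = y' by apply/eqP; rewrite eq_le y'y minc //; exact: in_hull_sub hd.
  by rewrite yy'; split=> // y2 /(in_hull_sub sub) /minc; rewrite yy'.
- split=> [|y2 /dom [y3 y32 /mind y3y]]; first exact: in_hull_sub hd.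
  exact: le_trans y32.
Qed.

End ConvexHull.

Lemma exists_last_arg_min (R : realDomainType) n (Q : pred 'I_n) (F : 'I_n -> R) i0 :
  Q i0 ->
  exists k, [/\ Q k, forall j, Q j -> F k <= F j
              & forall j : 'I_n, (k < j)%N -> Q j -> F k < F j].
Proof.
move=> Qi0; case: (arg_minP F Qi0) => g Qg gmin.
pose Qmin := [pred i | Q i && (F i == F g)].
have Qg' : Qmin g by rewrite /= Qg eqxx.
case: (arg_maxP (fun i : 'I_n => i : nat) Qg') => k /andP[Qk /eqP Fk] kmax.
exists k; split=> // [j Qj|j kj Qj]; first by rewrite Fk gmin.
rewrite lt_neqAle Fk gmin // andbT; apply: contraTneq kj => Fj.
by rewrite -leqNgt; apply: kmax; rewrite /= Qj -Fj eqxx.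
Qed.

Section Tilt.
Variables (K : fieldType) (v : K -> rat) (N : nat).
Implicit Types (c : nat -> K) (s : rat).

Definition tilt c s j := v (c j) - s * j%:R.

Lemma v_tilt c s j : v (c j) = tilt c s j + s * j%:R.
Proof. by rewrite subrK. Qed.

Lemma ler_tilt c s k i : (tilt c s k <= tilt c s i) = (tilt c s k + s * i%:R <= v (c i)).
Proof. by rewrite lerBrDr. Qed.

Lemma breakpoint_last_tilt_min c s k : (k <= N)%N -> c k != 0 ->
  (forall i : 'I_N.+1, c i != 0 -> tilt c s k <= tilt c s i) ->
  (forall i : 'I_N.+1, (k < i)%N -> c i != 0 -> tilt c s k < tilt c s i) ->
  breakpoint v c N k.
Proof.
move=> kN ck kmin klast; set al := tilt c s k.
have line (i : 'I_N.+1) : c i != 0 -> al + s * i%:R <= v (c i).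
  by move=> /kmin; rewrite ler_tilt.
split=> //; first by apply: on_NP_supporting line kN ck _; rewrite (v_tilt c s).
case=> x1 [y1 [x2 [y2 [t [[h1 _] [h2 _] /andP[_ kx2] /andP[t0 t1] [ex ey]]]]]].
have gap1 := in_hull_above_line line h1; have gap2 := in_hull_above_line line h2.
have gap0 : t * (y1 - (al + s * x1)) + (1 - t) * (y2 - (al + s * x2)) = 0.
  have -> : t * (y1 - (al + s * x1)) + (1 - t) * (y2 - (al + s * x2)) =
      t * y1 + (1 - t) * y2 - (al + s * (t * x1 + (1 - t) * x2)) by ring.
  by rewrite -ex -ey (v_tilt c s) subrr.
(* both endpoints lie above the supporting line, and (k, v (c k)) lies on it *)
have e2 : y2 = al + s * x2.
  have d1_ge0 : 0 <= t * (y1 - (al + s * x1)).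
    by apply: mulr_ge0; [exact: ltW | rewrite subr_ge0].
  have d2_ge0 : 0 <= (1 - t) * (y2 - (al + s * x2)).
    by apply: mulr_ge0; rewrite subr_ge0 // ltW.
  have : (1 - t) * (y2 - (al + s * x2)) = 0 by lra.
  by move/eqP; rewrite mulf_eq0 !subr_eq0 (gt_eqF t1) => /eqP.
have : x2 <= k%:R.
  apply: (in_hull_on_line_le line); last by rewrite -e2.
  move=> i ci; rewrite (v_tilt c s) => /addIr ei; rewrite leqNgt; apply/negP => ki.
  by have := klast i ki ci; rewrite ei ltxx.
by rewrite leNgt kx2.
Qed.

Lemma collinear_not_breakpoint c s j k n :
  (forall i : 'I_N.+1, c i != 0 -> tilt c s k <= tilt c s i) ->
  (j < k)%N -> (k < n)%N -> (n <= N)%N -> c j != 0 -> c n != 0 ->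
  tilt c s j = tilt c s k -> tilt c s n = tilt c s k -> ~ breakpoint v c N k.
Proof.
move=> kmin jk kn nN cj cn ej en [_ _ _]; apply.
have line (i : 'I_N.+1) : c i != 0 -> tilt c s k + s * i%:R <= v (c i).
  by move=> /kmin; rewrite ler_tilt.
have on_line i : (i <= N)%N -> c i != 0 -> tilt c s i = tilt c s k ->
    on_NP v c N i%:R (v (c i)).
  by move=> iN ci ei; apply: on_NP_supporting line iN ci _; rewrite (v_tilt c s) ei.
have [jkr knr] : j%:R < k%:R :> rat /\ k%:R < n%:R :> rat by rewrite !ltr_nat.
have nj0 : n%:R - j%:R != 0 :> rat by rewrite subr_eq0 gt_eqF // (lt_trans jkr).
exists j%:R, (v (c j)), n%:R, (v (c n)), ((n%:R - k%:R) / (n%:R - j%:R)).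
split; rewrite ?jkr ?knr //.
- by apply: on_line => //; apply: leq_trans (ltnW (leq_trans jk (ltnW kn))) nN.
- exact: on_line.
- have nj : 0 < n%:R - j%:R :> rat by rewrite subr_gt0 (lt_trans jkr).
  have t1 : (n%:R - k%:R) / (n%:R - j%:R) < 1 :> rat.
    by rewrite ltr_pdivrMr // mul1r ltrD2l ltrN2.
  by rewrite t1 divr_gt0 // subr_gt0.
- split; first by field.
  by rewrite !(v_tilt c s) ej en; field.
Qed.

Lemma tilt_lt_not_on_NP c s k m n :
  (k < m)%N -> (m < n)%N -> (n <= N)%N -> c k != 0 -> c n != 0 ->
  tilt c s k < tilt c s m -> tilt c s n <= tilt c s m ->
  ~ on_NP v c N m%:R (v (c m)).
Proof.
move=> km mn nN ck cn lt_km le_nm [_ minm].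
have kN : (k <= N)%N by rewrite ltnW // (ltn_trans km) // (leq_trans mn).
have lt_kn : k%:R < n%:R :> rat by rewrite ltr_nat (ltn_trans km).
have kmn : (k%:R <= m%:R :> rat) && (m%:R <= n%:R :> rat).
  by rewrite !ler_nat (ltnW km) (ltnW mn).
pose t := (m%:R - k%:R) / (n%:R - k%:R) : rat.
have tE : t * (n%:R - k%:R) = m%:R - k%:R by rewrite divfK // subr_eq0 gt_eqF.
have t0 : 0 <= t by rewrite divr_ge0 // subr_ge0 ler_nat ltnW // (ltn_trans km).
have t1 : t < 1 by rewrite ltr_pdivrMr ?subr_gt0 // mul1r ltrD2r ltr_nat.
have := minm _ (in_hull_segment lt_kn kmn (in_hull_point v kN ck) (in_hull_point v nN cn)).
rewrite -/t !(v_tilt c s).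
have -> : tilt c s k + s * k%:R + t * (tilt c s n + s * n%:R - (tilt c s k + s * k%:R))
    = tilt c s k + t * (tilt c s n - tilt c s k) + s * (t * (n%:R - k%:R)) + s * k%:R.
  by ring.
rewrite tE; have : 0 < (1 - t) * (tilt c s m - tilt c s k) by rewrite mulr_gt0 // subr_gt0.
have : 0 <= t * (tilt c s m - tilt c s n) by rewrite mulr_ge0 // subr_ge0.
lra.
Qed.

Definition tilt_record c s j : bool :=
  (c j != 0) && [forall i : 'I_j, (c i != 0) ==> (tilt c s j < tilt c s i)].

Definition record_part c s i : K := if tilt_record c s i then c i else 0.

Lemma record_partP c s i :
  record_part c s i != 0 -> tilt_record c s i /\ record_part c s i = c i.
Proof. by rewrite /record_part; case: ifP; rewrite ?eqxx. Qed.

Lemma exists_tilt_record_le c s j : c j != 0 ->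
  exists g, [/\ tilt_record c s g, (g <= j)%N & tilt c s g <= tilt c s j].
Proof.
elim/ltn_ind: j => j IH cj.
have [rj|] := boolP (tilt_record c s j); first by exists j.
rewrite /tilt_record cj => /forallPn[i]; rewrite negb_imply -leNgt => /andP[ci le].
have [g [rg gi lg]] := IH i (ltn_ord i) ci.
by exists g; split=> //; [apply: leq_trans gi (ltnW (ltn_ord i)) | apply: le_trans lg le].
Qed.

Lemma in_hull_record_part c c' s m x y :
  (m <= N)%N -> tilt_record c s m ->
  (forall i : 'I_N.+1, c i != 0 -> tilt c s m <= tilt c s i) ->
  (forall i : 'I_N.+1, c' i != 0 -> exists j,
      [/\ (j <= i)%N, c j != 0 & tilt c s j + s * i%:R <= v (c' i)]) ->
  in_hull v c' N x y -> x <= m%:R ->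
  exists2 y', y' <= y & in_hull v (record_part c s) N x y'.
Proof.
move=> mN rm mmin dom hc xm.
have red (i : 'I_N.+1) : c' i != 0 -> exists g : 'I_N.+1,
    [/\ record_part c s g != 0, (g <= i)%N
      & v (record_part c s g) + s * (i%:R - g%:R) <= v (c' i)].
  case/dom => j [ji cj lj]; have [g [rg gj lg]] := exists_tilt_record_le s cj.
  have gN : (g < N.+1)%N by apply: leq_ltn_trans gj (leq_ltn_trans ji _).
  exists (Ordinal gN); rewrite /record_part /= rg; split.
  - by case/andP: rg.
  - exact: leq_trans gj ji.
  - by rewrite (v_tilt c s); lra.
have [xg [yg [hg xgx gy]]] := in_hull_reduce red hc.
have line (i : 'I_N.+1) : record_part c s i != 0 ->
    tilt c s m + s * i%:R <= v (record_part c s i).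
  by case/record_partP => /andP[ci _] ->; rewrite -ler_tilt mmin.
have lg := in_hull_above_line line hg.
have [exg|xgx'] := eqVneq xg x.
  by exists yg; [move: gy; rewrite exg subrr mulr0 addr0 | rewrite -exg].
have xgm : xg < m%:R by apply: lt_le_trans xm; rewrite lt_neqAle xgx' xgx.
(* move from (xg, yg) towards the record point m, along which the slope is at most s *)
have em : record_part c s m = c m by rewrite /record_part rm.
have hm : in_hull v (record_part c s) N m%:R (v (c m)).
  by rewrite -em; apply: in_hull_point => //; rewrite em; case/andP: rm.
set t := (x - xg) / (m%:R - xg).
exists (yg + t * (v (c m) - yg)); last by apply: in_hull_segment xgm _ hg hm; rewrite xgx.
have tE : t * (m%:R - xg) = x - xg by rewrite divfK // subr_eq0 gt_eqF.
have : t * (v (c m) - yg) <= t * (s * (m%:R - xg)).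
  apply: ler_wpM2l; first by rewrite divr_ge0 // subr_ge0 // ltW.
  by rewrite (v_tilt c s m); lra.
by rewrite mulrCA tE; lra.
Qed.

Lemma on_NP_eq_upto_record c c' s m x y :
  (m <= N)%N -> tilt_record c s m ->
  (forall i : 'I_N.+1, c i != 0 -> tilt c s m <= tilt c s i) ->
  (forall i : 'I_N.+1, c' i != 0 -> exists j,
      [/\ (j <= i)%N, c j != 0 & tilt c s j + s * i%:R <= v (c' i)]) ->
  (forall i : 'I_N.+1, tilt_record c s i -> c' i != 0 /\ v (c' i) = v (c i)) ->
  x <= m%:R -> on_NP v c' N x y <-> on_NP v c N x y.
Proof.
move=> mN rm mmin dom' same xm.
have sub (i : 'I_N.+1) : record_part c s i != 0 ->
    c i != 0 /\ v (c i) = v (record_part c s i).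
  by case/record_partP => /andP[ci _] ->.
have sub' (i : 'I_N.+1) : record_part c s i != 0 ->
    c' i != 0 /\ v (c' i) = v (record_part c s i).
  by case/record_partP => /same + ->.
have dom (i : 'I_N.+1) : c i != 0 -> exists j,
    [/\ (j <= i)%N, c j != 0 & tilt c s j + s * i%:R <= v (c i)].
  by move=> ci; exists i; rewrite leqnn ci (v_tilt c s i).
apply: iff_trans (on_NP_sub_iff sub' _ y) (iff_sym (on_NP_sub_iff sub _ y)) => y' h.
- exact: in_hull_record_part mN rm mmin dom' h xm.
- exact: in_hull_record_part mN rm mmin dom h xm.
Qed.

End Tilt.

Lemma coef_XaddC_exp (R : comNzRingType) (c : R) i n :
  (('X + c%:P) ^+ i)`_n = 'C(i, n)%:R * c ^+ (i - n).
Proof.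
elim: i n => [|i IH] n.
  by rewrite expr0 coef1; case: n => [|n]; rewrite ?bin0 ?bin0n ?mulr1 ?mul0r.
rewrite exprSr mulrDr coefD coefMC coefMX IH; case: n => [|n] /=.
  by rewrite IH !bin0 !subn0 add0r !mul1r exprSr.
rewrite IH binS natrD mulrDl addrC subSS.
congr (_ + _); have [lt_in|le_ni] := ltnP i n.+1; first by rewrite bin_small // !mul0r.
by rewrite -mulrA -exprSr subnSK.
Qed.

Section TaylorShift.
Variables (K : fieldType) (v : K -> rat).
Hypothesis vM : forall x y : K, x != 0 -> y != 0 -> v (x * y) = v x + v y.
Hypothesis vD : forall x y : K, x != 0 -> y != 0 -> x + y != 0 ->
  Num.min (v x) (v y) <= v (x + y).
Variables (P : {poly K}) (N : nat) (c : K).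
Hypotheses (sizeP : size P = N.+1) (c0 : c != 0).

Local Notation a := (rcoef P).
Local Notation b := (rcoef (P \Po ('X + c%:P))).

Lemma rcoef_shift k :
  b k = \sum_(i < N.+1) P`_i * ('C(i, N - k)%:R * c ^+ (i - (N - k))).
Proof.
rewrite /rcoef size_comp_poly2 ?size_XaddC // sizeP coef_comp_poly sizeP.
by apply: eq_bigr => i _; rewrite coef_XaddC_exp.
Qed.

Lemma shift_term_bound k (i : 'I_N.+1) : (k <= N)%N ->
  P`_i * ('C(i, N - k)%:R * c ^+ (i - (N - k))) != 0 ->
  [/\ (N - i <= k)%N, a (N - i) != 0
    & tilt v a (v c) (N - i) + v c * k%:R
        <= v (P`_i * ('C(i, N - k)%:R * c ^+ (i - (N - k))))].
Proof.
move=> kN; rewrite !mulf_eq0 !negb_or => /and3P[Pi Ci _].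
have iN := ltn_ord i.
have ki : (N - k <= i)%N.
  by rewrite leqNgt; apply/negP => /bin_small Ci0; rewrite Ci0 eqxx in Ci.
have aE : a (N - i) = P`_i by rewrite /rcoef sizeP subKn.
have ik : (N - i <= k)%N by lia.
split=> //; first by rewrite aE.
have -> : (i - (N - k) = k - (N - i))%N by lia.
rewrite !vM ?mulf_neq0 ?expf_neq0 // (vX vM) // /tilt aE (natrB _ ik).
by have := v_natr_ge0 vM vD Ci; lra.
Qed.

Lemma v_rcoef_shift_ge k : (k <= N)%N -> b k != 0 ->
  exists j, [/\ (j <= k)%N, a j != 0 & tilt v a (v c) j + v c * k%:R <= v (b k)].
Proof.
move=> kN; rewrite rcoef_shift => /(v_sum_ge_term vD) [i [_ ti le]].
have [ik ai lti] := shift_term_bound kN ti.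
by exists (N - i)%N; split=> //; apply: le_trans le.
Qed.

Lemma v_rcoef_shift_record j : (j <= N)%N -> tilt_record v a (v c) j ->
  b j != 0 /\ v (b j) = v (a j).
Proof.
move=> jN /andP[aj /forallP jrec].
have j' : (N - j < N.+1)%N by rewrite ltnS leq_subr.
have aE : a j = P`_(N - j) by rewrite /rcoef sizeP.
rewrite rcoef_shift (bigD1 (Ordinal j')) //= binn subnn expr0 !mulr1 -aE.
apply: (v_addr_dominant vM vD aj) => /(v_sum_ge_term vD) [i [ij ti le]].
have [ik ai lti] := shift_term_bound jN ti.
have lt_ij : (N - i < j)%N.
  by move: ij (ltn_ord i); rewrite -val_eqE /= => ij iN; lia.
have := jrec (Ordinal lt_ij); rewrite /= ai /= => lt_tilt.
by apply: lt_le_trans le; rewrite (v_tilt v a (v c) j); lra.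
Qed.

End TaylorShift.

Section LastBreakpoint.
Variables (K : fieldType) (v : K -> rat) (c : nat -> K) (N m : nat) (s : rat).
Hypotheses (cN : c N != 0) (bm : breakpoint v c N m) (mN : (m < N)%N).
Hypothesis mmax : forall k, breakpoint v c N k -> (k < N)%N -> (k <= m)%N.
Hypothesis es : s = (v (c N) - v (c m)) / (N%:R - m%:R).

Lemma tiltN_last_breakpoint : tilt v c s N = tilt v c s m.
Proof.
have Nm : N%:R - m%:R != 0 :> rat by rewrite subr_eq0 gt_eqF // ltr_nat.
by rewrite /tilt es; field.
Qed.

Lemma tilt_min_last_breakpoint j : (j <= N)%N -> c j != 0 ->
  tilt v c s m <= tilt v c s j.
Proof.
move=> jN cj; have cN' : c (@ord_max N) != 0 by [].
have [k [ck kmin klast]] :=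
  exists_last_arg_min (Q := fun i : 'I_N.+1 => c i != 0) (fun i => tilt v c s i) cN'.
rewrite leNgt; apply/negP => lt_jm.
have lt_km : tilt v c s k < tilt v c s m.
  by apply: le_lt_trans lt_jm; apply: (kmin (Ordinal (jN : (j < N.+1)%N))).
have kN : (k <= N)%N := ltn_ord k.
have [lt_mk|le_km] := ltnP m k.
  have lt_kN : (k < N)%N.
    rewrite ltn_neqAle kN andbT; apply: contraTneq lt_km => ->.
    by rewrite tiltN_last_breakpoint ltxx.
  have := mmax (breakpoint_last_tilt_min kN ck kmin klast) lt_kN.
  by rewrite leqNgt lt_mk.
have {le_km} lt_km' : (k < m)%N.
  by rewrite ltn_neqAle le_km andbT; apply: contraTneq lt_km => ->; rewrite ltxx.
have [_ _ onNPm _] := bm; apply: tilt_lt_not_on_NP lt_km' mN (leqnn N) ck cN lt_km _ onNPm.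
by rewrite tiltN_last_breakpoint.
Qed.

Lemma tilt_record_last_breakpoint : tilt_record v c s m.
Proof.
have [_ cm _ _] := bm.
have mmin (i : 'I_N.+1) : c i != 0 -> tilt v c s m <= tilt v c s i.
  exact: tilt_min_last_breakpoint (ltn_ord i).
rewrite /tilt_record cm; apply/forallP => j; apply/implyP => cj.
have jN : (j <= N)%N by rewrite ltnW // (ltn_trans (ltn_ord j)).
rewrite lt_neqAle tilt_min_last_breakpoint // andbT; apply/eqP => ej.
exact: (collinear_not_breakpoint mmin (ltn_ord j) mN (leqnn N) cj cN
          (esym ej) tiltN_last_breakpoint bm).
Qed.

Lemma above_NP_last_edge k y : (m <= k <= N)%N ->
  v (c m) + s * (k%:R - m%:R) <= y -> above_NP v c N k%:R y.
Proof.
move=> /andP[mk kN] ky; exists (v (c m) + s * (k%:R - m%:R)); split=> //.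
have [_ cm _ _] := bm.
have Nm : N%:R - m%:R != 0 :> rat by rewrite subr_eq0 gt_eqF // ltr_nat.
have -> : s * (k%:R - m%:R) =
    (k%:R - m%:R) / (N%:R - m%:R) * (v (c N) - v (c m)) by rewrite es; field.
apply: in_hull_segment (in_hull_point v (ltnW mN) cm) (in_hull_point v (leqnn N) cN).
  by rewrite ltr_nat.
by rewrite !ler_nat mk kN.
Qed.

End LastBreakpoint.

Unset Implicit Arguments.

Theorem lemma2p4 (p : nat) (K : fieldType) (v : K -> rat) (pw : rat -> K)
  (Hp : prime p) (HK : padic_MN_like p v pw)
  (P : {poly K}) (N : nat) (HN : N = (size P).-1) (HN0 : (0 < N)%N)
  (Ha0 : rcoef P 0 != 0) (HaN : rcoef P N != 0)
  (m : nat) (Hm : breakpoint v (rcoef P) N m) (HmN : (m < N)%N)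
  (Hmax : forall k, breakpoint v (rcoef P) N k -> (k < N)%N -> (k <= m)%N)
  (s : rat)
  (Hs : s = (v (rcoef P N) - v (rcoef P m)) / (N%:R - m%:R))
  (u : K) (Hu0 : u != 0) (Hu : v u = 0) :
  let Pu := P \Po ('X + (u * pw s)%:P) in
  (forall x y : rat, 0 <= x <= m%:R ->
     (on_NP v (rcoef Pu) N x y <-> on_NP v (rcoef P) N x y))
  /\
  (forall k : nat, (m < k <= N)%N -> rcoef Pu k != 0 ->
     v (rcoef P m) + s * (k%:R - m%:R) <= v (rcoef Pu k)
     /\ above_NP v (rcoef P) N k%:R (v (rcoef Pu k))).
Proof.
move=> Pu; have [vM vD pw_neq0 v_pw _ _] := HK.
have c0 : u * pw s != 0 by rewrite mulf_neq0.
have vc : v (u * pw s) = s by rewrite vM // Hu v_pw add0r.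
have sizeP : size P = N.+1 by lia.
have b_ge := v_rcoef_shift_ge vM vD sizeP c0; rewrite vc -/Pu in b_ge.
have b_rec := v_rcoef_shift_record vM vD sizeP c0; rewrite vc -/Pu in b_rec.
have tmin := tilt_min_last_breakpoint HaN Hm HmN Hmax Hs.
split=> [x y /andP[_ xm] | k /andP[mk kN] bk].
  apply: on_NP_eq_upto_record (ltnW HmN) _ (fun i => tmin i (ltn_ord i)) _ _ xm.
  - exact: tilt_record_last_breakpoint HaN Hm HmN Hmax Hs.
  - by move=> i; apply: b_ge (ltn_ord i).
  - by move=> i; apply: b_rec (ltn_ord i).
have [j [jk aj lj]] := b_ge k kN bk.
have lm := tmin j (leq_trans jk kN) aj.
have bound : v (rcoef P m) + s * (k%:R - m%:R) <= v (rcoef Pu k).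
  by rewrite (v_tilt v (rcoef P) s m); lra.
have mkN : (m <= k <= N)%N by rewrite (ltnW mk) kN.
by split=> //; apply: (above_NP_last_edge HaN Hm HmN Hs mkN).
Qed.
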